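(* Let $\Gamma$ be a discrete group and $X$ a compact $\Gamma$-space. Then: (i) $X_0^0=\left(\bigcup_{g\in\Gamma}\partial(\operatorname{int}X^g)\right)^{c}$; (ii) if $\Gamma$ is countable, then $X_0^0$ is a dense $G_\delta$ subset of $X$; (iii) $\{x\in X:\Gamma_x=\Gamma_x^0\}\subseteq X_0^0$; (iv) $X_0^0=X$ if and only if $\operatorname{int}X^g$ is closed for all $g\in\Gamma$.
   Context: A compact $\Gamma$-space is a compact Hausdorff space with an action of $\Gamma$ by homeomorphisms. $X^g=\{x:gx=x\}$, $\partial$ denotes topological boundary, $\Gamma_x=\{g:gx=x\}$, and $\Gamma_x^0=\{g: g\text{ fixes pointwise an open neighborhood of } x\}$. $\operatorname{Sub}(\Gamma)$ is the space of subgroups of $\Gamma$ with the Chabauty topology (induced from the product topology on $\{0,1\}^\Gamma$ via characteristic functions), and $X_0^0$ is the set of points of $X$ at which the map $X\to\operatorname{Sub}(\Gamma)$, $x\mapsto\Gamma_x^0$, is continuous. *)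

From HB Require Import structures.
From mathcomp Require Import all_boot monoid.
From mathcomp Require Import all_classical all_reals all_analysis.
From mathcomp Require Import borel_hierarchy.
Set Implicit Arguments. Unset Strict Implicit. Unset Printing Implicit Defensive.
Local Open Scope classical_set_scope.

Definition is_action_by_homeo (G : groupType) (X : topologicalType)
    (act : G -> X -> X) : Prop :=
  (forall x, act monoid.one x = x) /\
  (forall g h x, act (monoid.mul g h) x = act g (act h x)) /\
  (forall g, continuous (act g)).

Definition fixpts (G : groupType) (X : topologicalType)
    (act : G -> X -> X) (g : G) : set X := [set x | act g x = x].

Definition boundary (X : topologicalType) (A : set X) : set X :=
  closure A `\` A°.

Definition stabG (G : groupType) (X : topologicalType)
    (act : G -> X -> X) (x : X) : set G := [set g | act g x = x].

Definition stab0 (G : groupType) (X : topologicalType)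
    (act : G -> X -> X) (x : X) : set G :=
  [set g | exists U : set X, [/\ open U, U x & U `<=` fixpts act g]].

(* characteristic function of Gamma_x^0 as a point of {0,1}^G
   (product topology); Sub(G) carries the subspace topology of it. *)
Definition stab0_chi (G : groupType) (X : topologicalType)
    (act : G -> X -> X) (x : X) : {ptws G -> bool} :=
  fun g => `[< stab0 act x g >].

Definition X00 (G : groupType) (X : topologicalType)
    (act : G -> X -> X) : set X :=
  [set x | {for x, continuous (stab0_chi act)}].

From HB Require Import structures.
From mathcomp Require Import all_boot monoid.
From mathcomp Require Import all_classical all_reals all_analysis.
From mathcomp Require Import borel_hierarchy.
Local Open Scope classical_set_scope.

(* Γ_x^0 is the set of g with x ∈ int X^g, so in the product {0,1}^Γ the map
   x ↦ Γ_x^0 is continuous at x iff, for every g, the indicator of the open set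
   int X^g is locally constant at x, i.e. iff x ∉ ∂(int X^g).  This is (i), and
   (iv) follows since an open set has empty boundary iff it is closed.  The
   boundary of an open set is closed and nowhere dense, so for countable Γ the
   set X_0^0 is a countable intersection of dense open sets, dense by Baire's
   theorem for compact Hausdorff spaces.  For (iii): X^g is closed, so a point
   of ∂(int X^g) is fixed by g without lying in int X^g, i.e. g ∈ Γ_x \ Γ_x^0. *)

Lemma ptws_cvgP (I : Type) (T : topologicalType) (F : set_system {ptws I -> T})
    (f : {ptws I -> T}) :
  Filter F -> F --> f <-> forall i, (fun g => g i) @ F --> f i.
Proof.
move=> FF; rewrite cvg_sup; split=> Ff i A.
  by move/(@initial_continuous _ _ (fun g : I -> T => g i) f); exact: Ff.
rewrite nbhsE => -[_ [[B oB <-] Bf] BA]; apply: filterS BA _.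
by apply: Ff; exact: open_nbhs_nbhs.
Qed.

Lemma ptws_bool_continuousP (X : topologicalType) (I : Type)
    (f : X -> {ptws I -> bool}) (x : X) :
  {for x, continuous f} <-> forall i, \forall y \near x, f y i = f x i.
Proof.
rewrite /prop_for /continuous_at ptws_cvgP.
by split=> fx i; [move/discrete_cvg: (fx i) | apply/discrete_cvg; exact: fx].
Qed.

Section boundary.
Context {T : topologicalType}.
Implicit Types A : set T.

Lemma boundaryNP A x :
  ~ boundary A x <-> \forall y \near x, `[< A y >] = `[< A x >].
Proof.
have [Ax|nAx] := pselect (A x).
  rewrite (asboolT Ax); split=> [nbx|xA [_]]; last first.
    by apply; apply: filterS xA => y /asboolP.
  have xA : A° x.
    by apply: contrapT => nxA; apply: nbx; split=> //; exact: subset_closure.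
  by apply: filterS xA => y /asboolT.
rewrite (asboolF nAx); split=> [nbx|xA [cx _]].
  have : (~` A)° x.
    by rewrite interiorC => cx; apply: nbx; split=> // /interior_subset.
  by apply: filterS => y /asboolF.
have : (~` A)° x by apply: filterS xA => y + Ay; rewrite asboolT.
by rewrite interiorC.
Qed.

Lemma open_boundaryE A : open A -> boundary A = closure A `\` A.
Proof. by move=> /interior_id; rewrite /boundary => ->. Qed.

Lemma closed_boundary A : closed (boundary A).
Proof.
rewrite /boundary setDE; apply: closedI; first exact: closed_closure.
by rewrite closedC; exact: open_interior.
Qed.

Lemma dense_setC_boundary A : open A -> dense (~` boundary A).
Proof.
move=> oA O [y Oy] oO; rewrite open_boundaryE // setCD.
have [[z [Oz Az]]|OA0] := pselect (O `&` A !=set0).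
  by exists z; split=> //; right.
exists y; split=> //; left => cy; apply: OA0.
by have [z [Az Oz]] := cy O (open_nbhs_nbhs (conj oO Oy)); exists z.
Qed.

Lemma open_boundary_eq0 A : open A -> boundary A = set0 <-> closed A.
Proof.
move=> oA; rewrite open_boundaryE // -subset0; split=> [A0 x cx|cA x [/cA]//].
by apply: contrapT => nAx; exact: (A0 x).
Qed.

End boundary.

Lemma closed_fixed_points (T : topologicalType) (f : T -> T) :
  hausdorff_space T -> continuous f -> closed [set x | f x = x].
Proof.
move=> hT cf x clx; apply: hT => A B fxA xB.
have [y [fy [By Ay]]] := clx _ (filterI xB (cf x _ fxA)).
by exists y; split=> //; rewrite -fy.
Qed.

Lemma Gdelta_dense_bigcap (T : topologicalType) (I : Type) (D : set I)
    (F : I -> set T) :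
  countable D -> (forall i, D i -> open (F i) /\ dense (F i)) ->
  Gdelta_dense (\bigcap_(i in D) F i).
Proof.
move=> /countable_injP[e einj] oF.
exists (fun n => \bigcap_(i in D `&` [set i | e i = n]) F i); last first.
  apply/seteqP; split=> [x Fx n _ i [Di _]|x Fx i Di]; first exact: Fx.
  exact: (Fx (e i)).
move=> n; have [[i [Di ein]]|Dn0] := pselect (exists i, D i /\ e i = n).
  suff -> : D `&` [set i | e i = n] = [set i] by rewrite bigcap_set1; exact: oF.
  apply/seteqP; split=> [j [Dj ejn]|_ ->]; last by [].
  by apply: einj; rewrite ?inE // ein.
suff -> : D `&` [set i | e i = n] = set0.
  by rewrite bigcap_set0; split=> [|O [y Oy] _]; [exact: openT | exists y].
by apply/seteqP; split=> // i [Di ein]; apply: Dn0; exists i.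
Qed.

Section compact_Baire.
Context {T : topologicalType}.
Hypothesis cT : compact [set: T].

Lemma Cantor_intersection (V : (set T)^nat) :
  (forall n, V n !=set0) -> (forall n, V n.+1 `<=` V n) ->
  \bigcap_n closure (V n) !=set0.
Proof.
move=> V0 Vdecr.
have Vmono : {homo V : m n / (m <= n)%N >-> n `<=` m}.
  apply: (homo_leq (r := fun A B => B `<=` A)) => // [A|B A C BA CB].
    exact: subset_refl.
  exact: subset_trans CB BA.
have FV : ProperFilter (filter_from [set: nat] V).
  apply: filter_from_proper; last by move=> n _; exact: V0.
  apply: filter_from_filter; first by exists 0%N.
  move=> i j _ _; exists (maxn i j) => // x Vx.
  by split; apply: Vmono Vx; rewrite ?leq_maxl ?leq_maxr.
have [p [_ pV]] := cT _ FV filterT.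
by exists p => n _ B Bp; apply: pV => //; exists n.
Qed.

Hypothesis hT : hausdorff_space T.

Lemma open_dense_shrink {W D : set T} :
  open W -> W !=set0 -> open D -> dense D ->
  exists2 V, open V /\ V !=set0 & closure V `<=` W `&` D.
Proof.
move=> oW W0 oD dD; have [a [Wa Da]] := dD W W0 oW.
have /(compact_regular hT cT filterT)[U Ua cU] : nbhs a (W `&` D).
  by apply: open_nbhs_nbhs; split=> //; exact: openI.
exists U°; first by split; [exact: open_interior | exists a].
by apply: subset_trans cU; apply: closureS; exact: interior_subset.
Qed.

Theorem compact_Baire (D : (set T)^nat) :
  (forall n, open (D n) /\ dense (D n)) -> dense (\bigcap_n D n).
Proof.
move=> oD O O0 oO.
have /choice[next nextP] : forall Wn : set T * nat, exists V,
    open Wn.1 -> Wn.1 !=set0 ->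
    [/\ open V, V !=set0 & closure V `<=` Wn.1 `&` D Wn.2].
  move=> [W n]; have [[oW W0]|nW] := pselect (open W /\ W !=set0); last first.
    by exists set0 => oW W0; exfalso; exact: nW.
  have [V [oV V0] cV] := open_dense_shrink oW W0 (oD n).1 (oD n).2.
  by exists V.
pose fix V n := if n is m.+1 then next (V m, n) else next (O, 0%N).
have VP n : [/\ open (V n), V n !=set0 &
    closure (V n) `<=` (if n is m.+1 then V m else O) `&` D n].
  by elim: n => [|n [oV V0 _]]; apply: nextP.
have [p Vp] : \bigcap_n closure (V n) !=set0.
  apply: Cantor_intersection => n; first by have [] := VP n.
  by have [_ _ cV] := VP n.+1; move=> x /subset_closure/cV[].
exists p; split; first by have [_ _ /(_ p (Vp 0%N I))[]] := VP 0%N.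
by move=> n _; have [_ _ /(_ p (Vp n I))[]] := VP n.
Qed.

End compact_Baire.

Section fixed_point_sets.
Context {G : groupType} {X : topologicalType} (act : G -> X -> X).

Lemma stab0_interior x g : stab0 act x g <-> (fixpts act g)° x.
Proof.
rewrite /interior nbhsE.
by split=> [[U [oU Ux sU]]|[U [oU Ux] sU]]; exists U.
Qed.

Lemma stab0_chiE : stab0_chi act = fun x g => `[< (fixpts act g)° x >].
Proof.
by apply/funext => x; apply/funext => g; exact/asbool_equiv_eq/stab0_interior.
Qed.

Lemma X00_boundary :
  X00 act = ~` \bigcup_(g in [set: G]) boundary (fixpts act g)°.
Proof.
rewrite setC_bigcup predeqE => x.
rewrite /X00 /= stab0_chiE ptws_bool_continuousP.
by split=> x0 g; [move=> _; apply/boundaryNP | apply/boundaryNP/x0].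
Qed.

Lemma X00_Gdelta_dense : countable [set: G] -> Gdelta_dense (X00 act).
Proof.
move=> cG; rewrite X00_boundary setC_bigcup.
apply: Gdelta_dense_bigcap => // g _; split.
  by apply: closed_openC; exact: closed_boundary.
by apply: dense_setC_boundary; exact: open_interior.
Qed.

Lemma stabG_eq_stab0_X00 :
  hausdorff_space X -> (forall g, continuous (act g)) ->
  [set x | stabG act x = stab0 act x] `<=` X00 act.
Proof.
move=> hX act_cont x /= stab_eq; rewrite X00_boundary => -[g _].
rewrite open_boundaryE; last exact: open_interior.
move=> [clx]; apply; apply/stab0_interior; rewrite -stab_eq.
have clFx : closure (fixpts act g) x.
  by apply: closureS clx; exact: interior_subset.
exact: closed_fixed_points hX (act_cont g) _ clFx.
Qed.

Lemma X00_setT : X00 act = [set: X] <-> forall g, closed (fixpts act g)°.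
Proof.
rewrite X00_boundary -[[set: X]]setC0.
split=> [/setC_inj/bigcup0P bd0 g|cl].
  by apply/open_boundary_eq0; [exact: open_interior | exact: bd0].
congr (~` _); apply/bigcup0P => g _.
by apply/open_boundary_eq0; [exact: open_interior | exact: cl].
Qed.

End fixed_point_sets.

Theorem mainTheorem8 (G : groupType) (X : topologicalType) (act : G -> X -> X)
  (hX : compact [set: X]) (hH : hausdorff_space X)
  (hact : is_action_by_homeo act) :
  [/\ X00 act = ~` (\bigcup_(g in [set: G]) boundary (fixpts act g)°),
      countable [set: G] -> Gdelta (X00 act) /\ dense (X00 act),
      [set x | stabG act x = stab0 act x] `<=` X00 act
    & X00 act = [set: X] <-> (forall g : G, closed (fixpts act g)°)].
Proof.
have [_ [_ act_cont]] := hact.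
split; [exact: X00_boundary | | exact: stabG_eq_stab0_X00 | exact: X00_setT].
move=> /(X00_Gdelta_dense act)[F oF ->]; split; last exact: compact_Baire.
by exists F => // n; have [] := oF n.
Qed.
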